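(* Let $V\subseteq\{0,1\}^n$ and $\preceq$ a term order on $\mathbb{R}[x_1,\dots,x_n]$. Then $\mathcal{S}_\preceq(V)=\mathcal{S}_\preceq(T_i(V))$ for every $i=1,\dots,n$.
   Context: $T_i$ is the reflection in the hyperplane $\{x_i=\tfrac12\}$, mapping $v\in\{0,1\}^n$ to $(v_1,\dots,v_{i-1},1-v_i,v_{i+1},\dots,v_n)$. $\mathcal{S}_\preceq(V)=\{\tau\subseteq[n]:\prod_{j\in\tau}x_j\notin\mathrm{in}_\preceq(I(V))\}$, where $I(V)$ is the vanishing ideal of $V$ and $\mathrm{in}_\preceq$ the initial ideal. *)

From HB Require Import structures.
From mathcomp Require Import all_boot all_order all_algebra.
From mathcomp Require Import reals.
From mathcomp Require Import mpoly.
Set Implicit Arguments. Unset Strict Implicit. Unset Printing Implicit Defensive.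
Import Order.TTheory GRing.Theory Num.Theory.
Local Open Scope ring_scope.

Definition cube (n : nat) := {ffun 'I_n -> bool}.

Definition Trefl (n : nat) (i : 'I_n) (v : cube n) : cube n :=
  [ffun j => if j == i then ~~ v j else v j].

Definition TreflS (n : nat) (i : 'I_n) (V : {set cube n}) : {set cube n} :=
  [set Trefl i v | v in V].

Definition pt (R : realType) (n : nat) (v : cube n) : 'I_n -> R :=
  fun j => (v j)%:R.

Definition vanishing (R : realType) (n : nat) (V : {set cube n})
  (p : {mpoly R[n]}) : Prop :=
  forall v, v \in V -> p.@[pt R v] = 0.

Definition term_order (n : nat) (le : rel 'X_{1..n}) : Prop :=
  [/\ reflexive le, antisymmetric le, transitive le & total le] /\
  (forall m, le 0%MM m) /\
  (forall m1 m2 m3, le m1 m2 -> le (m1 + m3)%MM (m2 + m3)%MM).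

Definition is_lead (R : realType) (n : nat) (le : rel 'X_{1..n})
  (p : {mpoly R[n]}) (m : 'X_{1..n}) : Prop :=
  m \in msupp p /\ forall m', m' \in msupp p -> le m' m.

Definition ideal_gen (R : realType) (n : nat) (S : {mpoly R[n]} -> Prop)
  (p : {mpoly R[n]}) : Prop :=
  exists (s : seq ({mpoly R[n]} * {mpoly R[n]})),
    (forall gq, gq \in s -> S gq.2) /\ p = \sum_(gq <- s) gq.1 * gq.2.

Definition initial_ideal (R : realType) (n : nat) (le : rel 'X_{1..n})
  (I : {mpoly R[n]} -> Prop) : {mpoly R[n]} -> Prop :=
  ideal_gen (fun q => exists f m, [/\ I f, f != 0, is_lead le f m & q = 'X_[m]]).

Definition xsq (R : realType) (n : nat) (tau : {set 'I_n}) : {mpoly R[n]} :=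
  \prod_(j in tau) 'X_j.

(* tau belongs to S_le(V) *)
Definition in_std (R : realType) (n : nat) (le : rel 'X_{1..n})
  (V : {set cube n}) (tau : {set 'I_n}) : Prop :=
  ~ initial_ideal le (@vanishing R n V) (@xsq R n tau).

From HB Require Import structures.
From mathcomp Require Import all_boot all_order all_algebra.
From mathcomp Require Import reals.
From mathcomp Require Import mpoly.
From mathcomp Require Import zify.
Set Implicit Arguments. Unset Strict Implicit. Unset Printing Implicit Defensive.
Import Order.TTheory GRing.Theory Num.Theory.
Local Open Scope ring_scope.

(* The substitution x_i |-> 1 - x_i is an involutive ring automorphism which
   carries I(V) onto I(T_i(V)), since evaluating the substituted polynomial at
   T_i(v) is evaluating the original one at v.  It sends a monomial x^m to x^m
   plus monomials dividing x^m, and every term order refines divisibility, so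
   it preserves leading monomials.  Hence I(V) and I(T_i(V)) have the same
   leading monomials and the same initial ideal. *)

Lemma lepm0 n (m : 'X_{1..n}) : (0 <= m)%MM.
Proof. by apply/mnm_lepP => j; rewrite mnm0E. Qed.

Lemma lepm_add n (a b m1 m2 : 'X_{1..n}) :
  (a <= m1)%MM -> (b <= m2)%MM -> (a + b <= m1 + m2)%MM.
Proof.
move=> /mnm_lepP ha /mnm_lepP hb; apply/mnm_lepP => j.
by rewrite !mnmDE leq_add.
Qed.

Lemma lepm_add_eq n (a b m1 m2 : 'X_{1..n}) :
  (a <= m1)%MM -> (b <= m2)%MM -> (a + b)%MM = (m1 + m2)%MM -> (a, b) = (m1, m2).
Proof.
move=> /mnm_lepP ha /mnm_lepP hb /mnmP E.
by congr pair; apply/mnmP => j; move: (E j) (ha j) (hb j); rewrite !mnmDE; lia.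
Qed.

Lemma term_order_lepm n (le : rel 'X_{1..n}) :
  term_order le -> forall m1 m2, (m1 <= m2)%MM -> le m1 m2.
Proof.
move=> [_ [le0 leD]] m1 m2 /submK <-.
by rewrite -{1}[m1]add0m; apply: leD.
Qed.

Section DivisibilityLead.
Variables (R : idomainType) (n : nat).
Implicit Types (p q : {mpoly R[n]}) (m : 'X_{1..n}).

Definition lepm_lead p m := p@_m != 0 /\ {in msupp p, forall m', (m' <= m)%MM}.

Lemma lepm_lead1 : lepm_lead 1 0%MM.
Proof.
split; first by rewrite mcoeff1 eqxx oner_neq0.
by move=> m; rewrite msupp1 inE => /eqP ->; apply: lepm_refl.
Qed.

Lemma lepm_leadXU j : lepm_lead 'X_j U_(j)%MM.
Proof.
split; first by rewrite mcoeffX eqxx oner_neq0.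
by move=> m; rewrite msuppX inE => /eqP ->; apply: lepm_refl.
Qed.

Lemma lepm_lead1BXU j : lepm_lead (1 - 'X_j) U_(j)%MM.
Proof.
split; first by rewrite mcoeffB mcoeff1 mcoeffX mnm1_eq0 eqxx sub0r oppr_eq0 oner_neq0.
move=> m /msuppB_le; rewrite mem_cat msupp1 msuppX !inE.
by case/orP => /eqP ->; [apply: lepm0 | apply: lepm_refl].
Qed.

Lemma lepm_leadM p q m1 m2 :
  lepm_lead p m1 -> lepm_lead q m2 -> lepm_lead (p * q) (m1 + m2)%MM.
Proof.
move=> [p_m1 le_p] [q_m2 le_q]; split; last first.
  move=> m /msuppM_le /allpairsP [[a b] /= [pa qb ->]].
  exact: lepm_add (le_p _ pa) (le_q _ qb).
rewrite mpolyME raddf_sum /= (bigD1_seq (m1, m2)) /=; first last.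
- by rewrite allpairs_uniq ?msupp_uniq // => -[? ?] [? ?] _ _.
- by apply/allpairsP; exists (m1, m2); rewrite !mcoeff_msupp.
rewrite mcoeffZ mcoeffX eqxx mulr1 big1_seq ?addr0 ?mulf_neq0 //.
move=> ab /andP [ne /allpairsP [[a b] /= [pa qb abE]]]; subst ab.
rewrite mcoeffZ mcoeffX; case: eqP => [abE|]; last by rewrite mulr0.
by move: ne; rewrite (lepm_add_eq (le_p _ pa) (le_q _ qb) abE) eqxx.
Qed.

Lemma lepm_leadX p m k : lepm_lead p m -> lepm_lead (p ^+ k) (m *+ k)%MM.
Proof.
move=> pm; elim: k => [|k IHk]; first by rewrite expr0 mulm0n; apply: lepm_lead1.
by rewrite exprS mulmS; apply: lepm_leadM.
Qed.

Lemma lepm_lead_comp_mpolyX (t : n.-tuple {mpoly R[n]}) m :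
  (forall j, lepm_lead (tnth t j) U_(j)%MM) -> lepm_lead ('X_[m] \mPo t) m.
Proof.
move=> tU; rewrite comp_mpolyX {2}(multinomUE_id m).
apply: (big_ind2 lepm_lead lepm_lead1) => [? ? ? ?|j _]; first exact: lepm_leadM.
exact: lepm_leadX.
Qed.

End DivisibilityLead.

Lemma is_lead_comp_mpoly (R : realType) n (le : rel 'X_{1..n})
    (t : n.-tuple {mpoly R[n]}) (p : {mpoly R[n]}) (m : 'X_{1..n}) :
  term_order le -> (forall j, lepm_lead (tnth t j) U_(j)%MM) ->
  is_lead le p m -> is_lead le (p \mPo t) m.
Proof.
move=> hle tU [pm lep]; have [[_ anti_le trans_le _] _] := hle.
have tX_le m1 m' : m' \in msupp ('X_[m1] \mPo t) -> le m' m1.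
  by case: (lepm_lead_comp_mpolyX m1 tU) => _ /[apply] /(term_order_lepm hle).
have coefE m' : (p \mPo t)@_m' = \sum_(m1 <- msupp p) p@_m1 * ('X_[m1] \mPo t)@_m'.
  by rewrite comp_mpolyEX raddf_sum /=; apply: eq_bigr => m1 _; rewrite mcoeffZ.
split.
  rewrite mcoeff_msupp coefE (bigD1_seq m pm (msupp_uniq p)) /= big1_seq ?addr0.
    by apply: mulf_neq0; [rewrite -mcoeff_msupp | case: (lepm_lead_comp_mpolyX m tU)].
  move=> m1 /andP [ne pm1]; have [tm1m|] := boolP (m \in msupp ('X_[m1] \mPo t)).
    by move: ne; rewrite (anti_le m1 m) ?eqxx // lep ?tX_le.
  by move/memN_msupp_eq0 ->; rewrite mulr0.
move=> m'; rewrite mcoeff_msupp coefE.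
pose in_tX m1 := m' \in msupp ('X_[m1] \mPo t).
have [/hasP [m1 pm1 /tX_le m'm1] _|/hasPn not_tX] := boolP (has in_tX (msupp p)).
  exact: trans_le (lep _ pm1).
by rewrite big1_seq ?eqxx // => m1 /andP [_ /not_tX /memN_msupp_eq0 ->]; rewrite mulr0.
Qed.

Lemma ideal_genS (R : realType) n (S1 S2 : {mpoly R[n]} -> Prop) p :
  (forall q, S1 q -> S2 q) -> ideal_gen S1 p -> ideal_gen S2 p.
Proof. by move=> S12 [s [sS1 ->]]; exists s; split => // gq /sS1 /S12. Qed.

Section Reflection.
Variables (n : nat) (i : 'I_n).

Lemma TreflK : involutive (Trefl i).
Proof. by move=> v; apply/ffunP => j; rewrite !ffunE; case: eqP; rewrite ?negbK. Qed.

Lemma TreflSK : involutive (TreflS i).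
Proof. by move=> V; rewrite /TreflS -imset_comp (eq_imset _ TreflK) imset_id. Qed.

Definition mrefl_tuple (R : idomainType) : n.-tuple {mpoly R[n]} :=
  [tuple if j == i then 1 - 'X_j else 'X_j | j < n].

Lemma lepm_lead_mrefl (R : idomainType) j :
  lepm_lead (tnth (mrefl_tuple R) j) U_(j)%MM.
Proof.
rewrite tnth_mktuple; case: (j == i); [exact: lepm_lead1BXU | exact: lepm_leadXU].
Qed.

Variable R : realType.

Lemma meval_mrefl (p : {mpoly R[n]}) v :
  (p \mPo mrefl_tuple R).@[pt R (Trefl i v)] = p.@[pt R v].
Proof.
rewrite comp_mpoly_meval; apply: meval_eq => j; rewrite tnth_mktuple /pt.
have [->|ne] := eqVneq j i; last by rewrite mevalXU ffunE (negbTE ne).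
by rewrite mevalB meval1 mevalXU ffunE eqxx; case: (v i); rewrite ?subr0 ?subrr.
Qed.

Lemma vanishing_mrefl (V : {set cube n}) (p : {mpoly R[n]}) :
  vanishing V p -> vanishing (TreflS i V) (p \mPo mrefl_tuple R).
Proof. by move=> pV _ /imsetP [v vV ->]; rewrite meval_mrefl pV. Qed.

Lemma initial_ideal_TreflS (le : rel 'X_{1..n}) (V : {set cube n}) p :
  term_order le -> initial_ideal le (@vanishing R n V) p ->
  initial_ideal le (@vanishing R n (TreflS i V)) p.
Proof.
move=> hle; apply: ideal_genS => _ [f [m [fV _ fm ->]]].
have fm' := is_lead_comp_mpoly hle (@lepm_lead_mrefl R) fm.
exists (f \mPo mrefl_tuple R), m; split => //; first exact: vanishing_mrefl.
by apply: contraTneq fm'.1 => ->; rewrite msupp0.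
Qed.

End Reflection.

Theorem lemma2p7 (R : realType) (n : nat) (V : {set cube n})
  (le : rel 'X_{1..n}) (hle : term_order le) (i : 'I_n) :
  forall tau : {set 'I_n},
    @in_std R n le V tau <-> @in_std R n le (TreflS i V) tau.
Proof.
move=> tau; split; apply: contra_not; last exact: initial_ideal_TreflS.
by rewrite -{2}(TreflSK i V); apply: initial_ideal_TreflS.
Qed.
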